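(* Let $\mathcal{S}$ be a Borel space and $(\mathbf{y},\mathbf{X})$ a random element of $\{\pm1\}^n\times\mathcal{S}$. Let $\mathcal{F}$ be a family of Borel maps from $\mathcal{S}$ to $\{\pm1\}^n$. Define $\mathcal{M}(\mathbf{u},\mathbf{v})=\min\{\frac1n\sum_i\mathbf{1}\{u_i\ne v_i\},\frac1n\sum_i\mathbf{1}\{-u_i\ne v_i\}\}$ for $\mathbf{u},\mathbf{v}\in\{\pm1\}^n$, and $f(\cdot\mid\tilde{\mathbf{X}},\tilde{\mathbf{y}}_{-i})=\mathbb{P}(y_i=\cdot\mid\mathbf{X}=\tilde{\mathbf{X}},\mathbf{y}_{-i}=\tilde{\mathbf{y}}_{-i})$ for $i\in[n]$. Then $\inf_{\hat{\mathbf{y}}\in\mathcal{F}}\mathbb{E}\mathcal{M}(\hat{\mathbf{y}}(\mathbf{X}),\mathbf{y})\ge\frac{n-1}{3n-1}\cdot\frac1n\sum_{i=1}^n\mathbb{P}\big[f(y_i\mid\mathbf{X},\mathbf{y}_{-i})<f(-y_i\mid\mathbf{X},\mathbf{y}_{-i})\big]$.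
   Context: $\mathbf{y}_{-i}\in\{\pm1\}^{n-1}$ denotes $\mathbf{y}$ with its $i$-th entry removed; $f$ is a (regular) conditional probability mass function of $y_i$ given $(\mathbf{X},\mathbf{y}_{-i})$. *)

From HB Require Import structures.
From mathcomp Require Import all_boot all_order all_algebra.
From mathcomp Require Import all_classical all_reals all_analysis.
Set Implicit Arguments. Unset Strict Implicit. Unset Printing Implicit Defensive.
Import Order.TTheory GRing.Theory Num.Theory.
Local Open Scope classical_set_scope.
Local Open Scope ring_scope.

(* A sign vector in {+1,-1}^n: [true] encodes +1, [false] encodes -1;
   negation of a sign is [~~]. *)
Definition signvec (n : nat) := {ffun 'I_n -> bool}.

Definition drop_coord (n : nat) (i : 'I_n) (y : signvec n) : signvec n.-1 :=
  [ffun j => y (lift i j)].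

(* Measurability of a map into the finite set {+-1}^n (discrete sigma-algebra):
   every fibre is measurable. *)
Definition sign_measurable d (T : measurableType d) (n : nat) (g : T -> signvec n) :=
  forall v : signvec n, measurable (g @^-1` [set v]).

Definition Mloss (R : realType) (n : nat) (u v : signvec n) : R :=
  Num.min (n%:R^-1 * \sum_(i < n) ((u i != v i)%:R : R))
          (n%:R^-1 * \sum_(i < n) (((~~ u i) != v i)%:R : R)).

(* g is a (regular) conditional probability mass function of y_i given
   (X, y_{-i}), where (Y, X) is a random element on (Omega, P):
   g s x z = P(y_i = s | X = x, y_{-i} = z). *)
Definition is_cond_pmf (R : realType) d0 (Omega : measurableType d0)
  (P : probability Omega R) d (S : measurableType d) (n : nat)
  (Y : Omega -> signvec n) (X : Omega -> S) (i : 'I_n)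
  (g : bool -> S -> signvec n.-1 -> R) : Prop :=
  [/\ (forall s z, measurable_fun setT (fun x => g s x z)),
      (forall s x z, 0 <= g s x z),
      (forall x z, g true x z + g false x z = 1) &
      (forall s z (B : set S), measurable B ->
         P [set w | Y w i = s /\ B (X w) /\ drop_coord i (Y w) = z] =
         (\int[P]_(w in [set w | B (X w) /\ drop_coord i (Y w) = z])
            (g s (X w) z)%:E)%E)].

From HB Require Import structures.
From mathcomp Require Import all_boot all_order all_algebra.
From mathcomp Require Import all_classical all_reals all_analysis.
From mathcomp Require Import measurable_realfun zify lra.
Import Order.TTheory GRing.Theory Num.Theory.
Local Open Scope classical_set_scope.
Local Open Scope ring_scope.

(* From (X, y_{-i}) one can predict y_i by flipping
   yh(X) globally whenever that brings it closer to y_{-i} and reading off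
   its i-th sign.  No predictor of y_i from (X, y_{-i}) errs less often than
   the Bayes rule, so P[f(y_i | .) < f(-y_i | .)] is at most the error
   probability of this leave-one-out predictor.  Pointwise, if yh(X) differs
   from y in h coordinates, the n leave-one-out predictions make h mistakes
   when 2h <= n - 1, n - h mistakes when 2(h - 1) > n - 1, and n mistakes in
   the balanced case in between, where min(h, n - h) >= (n - 1)/2; in all
   cases (n - 1) * mistakes <= (3n - 1) * min(h, n - h) = (3n - 1) * n * M. *)

Definition hamming {m : nat} (u v : signvec m) : nat :=
  \sum_(i < m) (u i != v i).

(* The leave-one-out guess for y_i from u = yh(X) and z = y_{-i}: u_i, or -u_i
   when -u is closer than u to z off coordinate i. *)
Definition loo_sign {n : nat} (i : 'I_n) (u : signvec n) (z : signvec n.-1) :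
    bool :=
  if (2 * hamming (drop_coord i u) z <= n.-1)%N then u i else ~~ u i.

Lemma hamming_le {m} (u v : signvec m) : (hamming u v <= m)%N.
Proof.
rewrite -[X in (_ <= X)%N]card_ord -sum1_card.
by apply: leq_sum => i _; exact: leq_b1.
Qed.

Lemma hamming_drop_coord {n} (i : 'I_n) (u v : signvec n) :
  hamming u v = ((u i != v i) + hamming (drop_coord i u) (drop_coord i v))%N.
Proof.
rewrite /hamming (bigD1_ord i) //=; congr (_ + _)%N.
by apply: eq_bigr => j _; rewrite !ffunE.
Qed.

Lemma hamming_negv {m} (u v : signvec m) :
  (\sum_(i < m) (~~ u i != v i))%N = (m - hamming u v)%N.
Proof.
apply/eqP; rewrite -(eqn_add2r (hamming u v)) subnK ?hamming_le //.
rewrite -big_split /= -[X in _ == X]card_ord -sum1_card.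
by apply/eqP/eq_bigr => i _; case: (u i); case: (v i).
Qed.

Lemma loo_sign_mistakes {n} (u v : signvec n) (h := hamming u v) :
  (\sum_(i < n) (loo_sign i u (drop_coord i v) != v i) =
   (2 * (h - 1) <= n.-1) * h + (n.-1 < 2 * h) * (n - h))%N.
Proof.
have summandE i : (loo_sign i u (drop_coord i v) != v i) =
    (u i != v i) && (2 * (h - 1) <= n.-1)%N
    || (~~ u i != v i) && (n.-1 < 2 * h)%N.
  rewrite /loo_sign /h [hamming u v](hamming_drop_coord i).
  by case: (u i); case: (v i); case: ifP;
    rewrite /= ?add0n ?add1n ?subn1 /= ?ltnNge => ->.
under eq_bigr => i _ do rewrite summandE.
rewrite -hamming_negv /hamming !big_distrr /= -big_split /=.
apply: eq_bigr => i _.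
by case: (u i); case: (v i); case: (_ <= _)%N; case: (_ < _)%N.
Qed.

Lemma loo_sign_mistakes_le n h : (h <= n)%N ->
  ((n - 1) * ((2 * (h - 1) <= n.-1) * h + (n.-1 < 2 * h) * (n - h))
   <= (3 * n - 1) * minn h (n - h))%N.
Proof.
move=> hn.
case: leqP => h1; case: ltnP => h2 /=; rewrite ?mul1n ?mul0n ?addn0 ?add0n; nia.
Qed.

Lemma Mloss_hamming (R : realType) {n} (u v : signvec n) :
  Mloss R u v = n%:R^-1 * (minn (hamming u v) (n - hamming u v))%:R :> R.
Proof.
rewrite /Mloss -!natr_sum hamming_negv -minr_pMr ?invr_ge0 // -/(hamming u v).
have [h|h] := leqP (hamming u v) (n - hamming u v).
  by rewrite min_l ?ler_nat.
by rewrite min_r // ler_nat ltnW.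
Qed.

Lemma loo_risk_le_Mloss (R : realType) {n} (u v : signvec n) :
  (n%:R - 1) / (3 * n%:R - 1) *
    (n%:R^-1 * \sum_(i < n) ((loo_sign i u (drop_coord i v) != v i)%:R : R))
  <= Mloss R u v.
Proof.
rewrite Mloss_hamming -natr_sum loo_sign_mistakes.
have [n0|n_gt0] := posnP n.
  have -> : n%:R^-1 = 0 :> R by rewrite n0 invr0.
  by rewrite !mul0r mulr0.
have n1E : n%:R - 1 = (n - 1)%:R :> R by rewrite natrB.
have n3E : 3 * n%:R - 1 = (3 * n - 1)%:R :> R by rewrite natrB ?natrM //; lia.
rewrite mulrCA ler_pM2l ?invr_gt0 ?ltr0n // n1E n3E.
rewrite mulrAC ler_pdivrMr ?ltr0n; last by lia.
rewrite -!natrM ler_nat [X in (_ <= X)%N]mulnC.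
by rewrite loo_sign_mistakes_le ?hamming_le.
Qed.

Lemma loo_ratio_ge0 (R : realType) n : 0 <= (n%:R - 1) / (3 * n%:R - 1) :> R.
Proof.
have [->|n_gt0] := posnP n.
  by rewrite mulr0 sub0r divff ?oppr_eq0 ?oner_eq0.
apply: divr_ge0; first by rewrite subr_ge0 ler1n.
by rewrite subr_ge0 -natrM ler1n; lia.
Qed.

Lemma in_set_bool {T : Type} (b : T -> bool) x : (x \in [set y | b y]) = b x.
Proof. exact: asboolb. Qed.

Lemma measurable_fun_bool_natr {d} {T : measurableType d} {R : realType}
    {b : T -> bool} :
  measurable [set x | b x] -> measurable_fun setT (fun x => (b x)%:R : R).
Proof.
move=> mb; have -> : (fun x => (b x)%:R : R) = \1_[set x | b x].
  by apply/funext => x; rewrite indicE in_set_bool.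
exact: measurable_indic.
Qed.

Section finite_valued.
Context {d} {T : measurableType d} {V : finType} {Z : T -> V}.
Hypothesis mZ : forall v, measurable (Z @^-1` [set v]).

Lemma measurable_preimage_fin (A : set V) : measurable (Z @^-1` A).
Proof.
have -> : Z @^-1` A = \bigcup_(v in A) Z @^-1` [set v].
  by apply/seteqP; split => [w Aw | w [v Av /= ->]] //; exists (Z w).
by apply: fin_bigcup_measurable => //; exact: finite_finset.
Qed.

Lemma measurable_fun_comp_fin {d'} {U : measurableType d'} (h : V -> U) :
  measurable_fun setT (h \o Z).
Proof.
by move=> _ B _; rewrite setTI; exact: (measurable_preimage_fin (h @^-1` B)).
Qed.

Local Open Scope ereal_scope.

Lemma measure_fibre_sum {R : realType} (mu : {measure set T -> \bar R}) (E : set T) :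
  (forall v, measurable (E `&` Z @^-1` [set v])) ->
  mu E = \sum_(v : V) mu (E `&` Z @^-1` [set v]).
Proof.
move=> mEv.
have E_cover : E = \bigcup_(v in setT) (E `&` Z @^-1` [set v]).
  by apply/seteqP; split => [w Ew | w [v _ []]] //; exists (Z w).
rewrite {1}E_cover measure_fin_bigcup //; last 2 first.
- exact: finite_finset.
- by move=> v v' _ _ [w [[_ <-] [_ <-]]].
rewrite (fsbigE (index_enum V)) ?index_enum_uniq //.
- by apply: eq_bigl => v; rewrite in_setT.
- by move=> v _; rewrite mem_index_enum.
Qed.

Lemma sum_measure_le_integral {R : realType} (mu : {measure set T -> \bar R})
    {I : finType} (A : I -> set V) (k : R) (phi : V -> R) :
  (0 <= k)%R -> (forall v, k * \sum_i (v \in A i)%:R <= phi v)%R ->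
  k%:E * \sum_i mu (Z @^-1` A i) <= \int[mu]_w (phi (Z w))%:E.
Proof.
move=> k0 kA_phi.
have mA i : measurable (Z @^-1` A i) := measurable_preimage_fin (A i).
have mI i : measurable_fun setT (fun w => (\1_(Z @^-1` A i) w)%:E : \bar R).
  by apply/measurable_EFinP; exact: measurable_indic.
have I0 i w : setT w -> 0 <= (\1_(Z @^-1` A i) w)%:E :> \bar R.
  by move=> _; rewrite lee_fin indicE ler0n.
have muE i : mu (Z @^-1` A i) = \int[mu]_w (\1_(Z @^-1` A i) w)%:E.
  by rewrite integral_indic ?setIT.
rewrite (eq_bigr _ (fun i _ => muE i)).
rewrite -ge0_integral_sum // -ge0_integralZl //; last 2 first.
- exact: emeasurable_sum.
- by move=> w _; apply: sume_ge0 => i _; exact: I0.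
apply: ge0_le_integral => //.
- move=> w _; apply: mule_ge0; first by rewrite lee_fin.
  by apply: sume_ge0 => i _; exact: I0.
- by apply: emeasurable_funM => //; exact: emeasurable_sum.
- by apply/measurable_EFinP; exact: (measurable_fun_comp_fin phi).
move=> w _; rewrite sumEFin -EFinM lee_fin.
under eq_bigr do rewrite indicE.
exact: kA_phi.
Qed.

End finite_valued.

Lemma integral_setI_bool {d} {T : measurableType d} {R : realType}
    (mu : {measure set T -> \bar R}) (D : set T) (b : T -> bool) (h : T -> R) :
  (\int[mu]_(x in [set x | b x] `&` D) (h x)%:E =
   \int[mu]_(x in D) ((b x)%:R * h x)%:E)%E.
Proof.
rewrite integral_mkcondl; apply: eq_integral => x _.
by rewrite /patch in_set_bool; case: (b x); rewrite ?mul1r ?mul0r.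
Qed.

Lemma less_likely_mass_le (R : realDomainType) (p : bool -> R) (b : bool) :
  (forall s, 0 <= p s) ->
  \sum_(s : bool) (p s < p (~~ s))%R%:R * p s <= \sum_(s : bool) (b != s)%:R * p s.
Proof.
move=> p0; have := p0 true; have := p0 false.
rewrite !big_bool /=; case: b; case: ltrgtP => /=; rewrite ?mul1r ?mul0r; lra.
Qed.

Section cond_pmf.
Context {R : realType} {d0} {Omega : measurableType d0} {P : probability Omega R}
  {d} {S : measurableType d} {n : nat} {Y : Omega -> signvec n} {X : Omega -> S}.
Hypotheses (mY : sign_measurable Y) (mX : measurable_fun setT X).
Context {i : 'I_n} {g : bool -> S -> signvec n.-1 -> R}.
Hypothesis g_pmf : is_cond_pmf P Y X i g.

(* [B s z x] describes an event through y_i = s, y_{-i} = z and X = x;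
   [cond_prob B z x] is its conditional probability given X = x, y_{-i} = z. *)
Definition cond_prob (B : bool -> signvec n.-1 -> S -> bool) z x : R :=
  \sum_s (B s z x)%:R * g s x z.

Lemma cond_prob_ge0 (B : bool -> signvec n.-1 -> S -> bool) z x :
  0 <= cond_prob B z x.
Proof.
have [_ g0 _ _] := g_pmf.
by apply: sumr_ge0 => s _; apply: mulr_ge0 => //; exact: g0.
Qed.

Lemma measurable_fun_weighted_bool (b : S -> bool) s z :
  measurable [set x | b x] ->
  measurable_fun setT (fun x => (b x)%:R * g s x z).
Proof.
have [mg _ _ _] := g_pmf.
by move=> mb; exact: measurable_funM (measurable_fun_bool_natr mb) (mg s z).
Qed.

Lemma measurable_cond_prob (B : bool -> signvec n.-1 -> S -> bool) z :
  (forall s, measurable [set x | B s z x]) -> measurable_fun setT (cond_prob B z).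
Proof.
by move=> mB; apply: measurable_sum => s; exact: measurable_fun_weighted_bool.
Qed.

Lemma measurable_cond_event (B : set S) s z : measurable B ->
  measurable [set w | Y w i = s /\ B (X w) /\ drop_coord i (Y w) = z].
Proof.
move=> mB.
have -> : [set w | Y w i = s /\ B (X w) /\ drop_coord i (Y w) = z] =
    X @^-1` B `&` Y @^-1` [set u : signvec n | u i = s /\ drop_coord i u = z].
  by apply/seteqP; split => w /=; tauto.
apply: measurableI; first by rewrite -[X @^-1` B]setTI; exact: mX.
exact: (measurable_preimage_fin mY).
Qed.

Lemma measurable_drop_coord_fibre z : measurable [set w | drop_coord i (Y w) = z].
Proof. exact: (measurable_preimage_fin mY [set u | drop_coord i u = z]). Qed.

Local Open Scope ereal_scope.

Lemma prob_event_cond_pmf (B : bool -> signvec n.-1 -> S -> bool) :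
  (forall s z, measurable [set x | B s z x]) ->
  P [set w | B (Y w i) (drop_coord i (Y w)) (X w)] =
  \sum_(z : signvec n.-1) \int[P]_(w in [set w | drop_coord i (Y w) = z])
                             (cond_prob B z (X w))%:E.
Proof.
move=> mB; have [_ g0 _ g_cond] := g_pmf.
set E := [set w | _].
pose Z w := (Y w i, drop_coord i (Y w)).
have pieceE s z : E `&` Z @^-1` [set (s, z)] =
    [set w | Y w i = s /\ [set x | B s z x] (X w) /\ drop_coord i (Y w) = z].
  apply/seteqP; split => w /=; first by case=> Ew [<- <-].
  by move=> [ys [Bw zs]]; split; rewrite /E /Z /= ys zs.
have mpiece p : measurable (E `&` Z @^-1` [set p]).
  by case: p => s z; rewrite pieceE; exact: measurable_cond_event.
rewrite (measure_fibre_sum P E mpiece).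
rewrite (eq_bigr (fun p => P (E `&` Z @^-1` [set (p.1, p.2)]))); last by case.
rewrite -(pair_big xpredT xpredT (fun s z => P (E `&` Z @^-1` [set (s, z)]))) /=.
rewrite exchange_big /=; apply: eq_bigr => z _.
under eq_integral do rewrite -sumEFin.
have mDz := measurable_drop_coord_fibre z.
rewrite ge0_integral_sum //; last 2 first.
- move=> s; apply/measurable_EFinP/measurable_funTS.
  exact: measurableT_comp (measurable_fun_weighted_bool _ s z (mB s z)) mX.
- by move=> s w _; rewrite lee_fin; apply: mulr_ge0 => //; exact: g0.
apply: eq_bigr => s _.
rewrite pieceE (g_cond _ _ _ (mB s z)).
exact: (integral_setI_bool _ _ (fun w => B s z (X w))).
Qed.

Lemma bayes_error_le (G : S -> signvec n.-1 -> bool) :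
  (forall s z, measurable [set x | G x z != s]) ->
  P [set w | g (Y w i) (X w) (drop_coord i (Y w))
             < g (~~ Y w i) (X w) (drop_coord i (Y w))]%R
  <= P [set w | G (X w) (drop_coord i (Y w)) != Y w i].
Proof.
move=> mG; have [mg g0 _ _] := g_pmf.
have mlt s z : measurable [set x | g s x z < g (~~ s) x z]%R.
  have := measurable_fun_ltr (mg s z) (mg (~~ s) z) measurableT (Y := [set true]).
  by rewrite setTI; apply.
rewrite (prob_event_cond_pmf (fun s z x => g s x z < g (~~ s) x z)%R) //.
rewrite (prob_event_cond_pmf (fun s z x => G x z != s)) //.
apply: lee_sum => z _; apply: ge0_le_integral.
- exact: measurable_drop_coord_fibre.
- by move=> w _; rewrite lee_fin cond_prob_ge0.
- apply/measurable_EFinP/measurable_funTS.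
  exact: measurableT_comp (measurable_cond_prob _ z (fun s => mlt s z)) mX.
- apply/measurable_EFinP/measurable_funTS.
  exact: measurableT_comp (measurable_cond_prob _ z (fun s => mG s z)) mX.
by move=> w _; rewrite lee_fin less_likely_mass_le // => s; exact: g0.
Qed.

End cond_pmf.

Theorem lemmaF3 (R : realType) (d0 : measure_display) (Omega : measurableType d0)
  (P : probability Omega R) (d : measure_display) (S : measurableType d) (n : nat)
  (Y : Omega -> signvec n) (X : Omega -> S)
  (HY : sign_measurable Y) (HX : measurable_fun setT X)
  (F : set (S -> signvec n)) (HF : forall yh, F yh -> sign_measurable yh)
  (f : 'I_n -> bool -> S -> signvec n.-1 -> R)
  (Hf : forall i, is_cond_pmf P Y X i (f i)) :
  (ereal_inf [set (\int[P]_w (@Mloss R n (yh (X w)) (Y w))%:E)%E | yh in F]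
   >= ((n%:R - 1) / (3 * n%:R - 1))%:E *
      ((n%:R^-1)%:E *
       \sum_(i < n) P [set w | (f i (Y w i) (X w) (drop_coord i (Y w))
                               < f i (~~ Y w i) (X w) (drop_coord i (Y w)))%R]))%E.
Proof.
apply: le_ereal_inf_tmp => _ [yh /HF myh <-].
pose Z w := (yh (X w), Y w).
have mZ p : measurable (Z @^-1` [set p]).
  case: p => u v.
  have -> : Z @^-1` [set (u, v)] = X @^-1` (yh @^-1` [set u]) `&` Y @^-1` [set v].
    by apply/seteqP; split => w; rewrite /Z /= => -[-> ->].
  apply: measurableI (HY v).
  by rewrite -[X @^-1` _]setTI; exact: HX.
pose A i :=
  [set p : signvec n * signvec n | loo_sign i p.1 (drop_coord i p.2) != p.2 i].
set c := (n%:R - 1) / (3 * n%:R - 1).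
have c0 : 0 <= c := loo_ratio_ge0 R n.
have loo_le : ((c * n%:R^-1)%:E * \sum_i P (Z @^-1` A i)
               <= \int[P]_w (Mloss R (Z w).1 (Z w).2)%:E)%E.
  apply: (sum_measure_le_integral mZ P A _ (fun p => Mloss R p.1 p.2)) => [|v].
    by rewrite mulr_ge0 // invr_ge0.
  under eq_bigr do rewrite in_set_bool.
  by have := loo_risk_le_Mloss R v.1 v.2; rewrite mulrA.
apply: le_trans loo_le; rewrite [in X in (_ <= X)%E]EFinM -muleA.
apply: lee_wpmul2l; first by rewrite lee_fin.
apply: lee_wpmul2l; first by rewrite lee_fin invr_ge0.
apply: lee_sum => i _.
apply: (bayes_error_le HY HX (Hf i) (fun x z => loo_sign i (yh x) z)) => s z.
exact: (measurable_preimage_fin myh [set u | loo_sign i u z != s]).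
Qed.
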